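(* Let $\Gamma=(V,E)$ be a connected directed graph with $|V|=\infty$ and let $W(\Gamma)$ be the set of its words. Then for each $w\in W(\Gamma)$ and each $n\in\mathbb N$ there exists a word $w'\in W(\Gamma)$ of the form $w'=ww_1ww_2w\cdots w_{n-1}w$, with $w_i\in W(\Gamma)$, containing $n$ disjoint subwords equal to $w$, and such that the word $w'':=ww_1ww_2w\cdots w_{n-1}$ is simple.
   Context: A word of $\Gamma$ is a finite path $(v_1,\dots,v_k)$, i.e. $v_i\in V$ and $(v_i,v_{i+1})\in E$; words are concatenated by juxtaposition. $u$ is a subword of a word if it appears as a consecutive block. A word $(v_1,\dots,v_n)$, $n\ge2$, is simple if there is no $k$ with $2\le k\le n$ and $(v_1,\dots,v_{n-k+1})=(v_k,\dots,v_n)$. Connected means that for any two vertices there is a directed path from one to the other. *)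

From Stdlib Require Import List.
From mathcomp Require Import all_boot.
Set Implicit Arguments. Unset Strict Implicit. Unset Printing Implicit Defensive.

Fixpoint edge_chain (V : Type) (E : V -> V -> Prop) (w : seq V) : Prop :=
  match w with
  | x :: ((y :: _) as t) => E x y /\ edge_chain E t
  | _ => True
  end.

Definition is_word (V : Type) (E : V -> V -> Prop) (w : seq V) : Prop :=
  w <> [::] /\ edge_chain E w.

Definition infinite_type (V : Type) : Prop :=
  ~ exists s : seq V, forall v : V, List.In v s.

Definition connected_graph (V : Type) (E : V -> V -> Prop) : Prop :=
  forall u v : V, exists p : seq V, is_word E (u :: p) /\ last u p = v.

(* (v_1,...,v_n), n >= 2, is simple if there is no k, 2 <= k <= n, with
   (v_1,...,v_{n-k+1}) = (v_k,...,v_n). *)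
Definition simple_word (V : Type) (w : seq V) : Prop :=
  2 <= size w /\
  forall k, 2 <= k -> k <= size w -> take (size w - k + 1) w <> drop (k - 1) w.

(* w' contains n pairwise disjoint (non-overlapping) subwords equal to w:
   there are n starting positions p_1 < ... < p_n, each p_{i+1} >= p_i + |w|,
   at which w occurs as a consecutive block of w'. *)
Definition has_disjoint_occurrences (V : Type) (n : nat) (w w' : seq V) : Prop :=
  exists ps : seq nat,
    size ps = n /\ sorted (fun a b => a + size w <= b) ps /\
    forall p, p \in ps -> p + size w <= size w' /\ take (size w) (drop p w') = w.

Definition interleave (V : Type) (w : seq V) (ws : seq (seq V)) : seq V :=
  flatten [seq w ++ u | u <- ws].

From Stdlib Require Import List Classical ClassicalEpsilon.
From mathcomp Require Import all_boot zify.
Set Implicit Arguments. Unset Strict Implicit. Unset Printing Implicit Defensive.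

(* Let w run from h to t.  Since the graph is connected and infinite, for any
   finite set of vertices there is a walk from t back to h through a vertex z
   outside that set, which can be cut so that z occurs on it once and h does
   not occur after z.  Take one such detour m, and a second one c through a
   vertex z occurring neither in w nor in m.  Then w'' = w m w m ... w m w c
   starts with h, contains z exactly once and has no h after z; such a word
   has no proper border, i.e. it is simple.  The n copies of w starting the
   blocks of w' = w'' w are disjoint occurrences of w. *)

Section Membership.
Variable T : Type.

Lemma infinite_type_fresh : infinite_type T -> forall s : seq T, exists x, ~ In x s.
Proof.
move=> T_inf s; apply: NNPP => no_fresh; apply: T_inf; exists s => x.
by apply: NNPP => x_notin; apply: no_fresh; exists x.
Qed.

(* [in_app_iff] is stated for [app]; restating it for [cat] keeps unification
   from unfolding [cat (x :: s1) s2] before matching. *)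
Lemma In_cat (x : T) s1 s2 : In x (s1 ++ s2) <-> In x s1 \/ In x s2.
Proof. exact: in_app_iff. Qed.

Lemma nth_In_seq (x0 : T) s i : i < size s -> In (nth x0 s i) s.
Proof. by elim: s i => [|y s IHs] [|i] //= lt_i_s; [left | right; apply: IHs]. Qed.

Lemma In_nseq k (x y : T) : In y (nseq k x) -> y = x.
Proof. by elim: k => [|k IHk] //= [-> | /IHk]. Qed.

Lemma In_flatten_nseq k (s : seq T) y : In y (flatten (nseq k s)) -> In y s.
Proof. by elim: k => [|k IHk] //= /In_cat [|/IHk]. Qed.

End Membership.

Section Interleave.
Variable T : Type.
Implicit Types (w u : seq T) (ws : seq (seq T)).

Lemma interleave_cons w u ws : interleave w (u :: ws) = w ++ u ++ interleave w ws.
Proof. by rewrite /interleave /= catA. Qed.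

Lemma interleave_rcons w ws u : interleave w (rcons ws u) = interleave w ws ++ w ++ u.
Proof. by rewrite /interleave map_rcons -cats1 flatten_cat /= cats0. Qed.

Lemma interleave_catw w ws :
  interleave w ws ++ w = w ++ flatten [seq u ++ w | u <- ws].
Proof.
elim: ws => [|u ws IHws] /=; first by rewrite cats0.
by rewrite interleave_cons -!catA IHws.
Qed.

End Interleave.

Lemma has_disjoint_occurrences_interleave (T : Type) (w : seq T) ws :
  has_disjoint_occurrences (size ws).+1 w (interleave w ws ++ w).
Proof.
elim: ws => [|u ws [ps [size_ps [sorted_ps occ_ps]]]].
  exists [:: 0]; split=> //; split=> // p; rewrite inE => /eqP ->.
  by rewrite drop0 take_size.
set K := size (w ++ u).
exists (0 :: map (addn K) ps); split; first by rewrite /= size_map size_ps.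
rewrite interleave_cons -!catA catA; split.
  rewrite /= path_sortedE; last by move=> a b c /= ab bc; lia.
  rewrite all_map sorted_map; apply/andP; split.
    by apply/allP => p _ /=; rewrite /K size_cat; lia.
  by apply: sub_sorted sorted_ps => a b /=; lia.
move=> p; rewrite inE => /orP [/eqP -> | /mapP [p' ps_p' ->]].
  by rewrite add0n drop0 -catA take_size_cat // size_cat leq_addr.
have [p'_le occ_p'] := occ_ps p' ps_p'.
split; first by rewrite size_cat -addnA leq_add2l.
by rewrite addnC -drop_drop drop_size_cat.
Qed.

Lemma simple_word_marker (T : Type) (h z : T) P r :
  ~ In z (h :: P) -> ~ In h r -> simple_word (h :: P ++ z :: r).
Proof.
rewrite -cat_cons; set s := _ ++ _ => z_P h_r.
have size_s : size s = (size P).+1 + (size r).+1 by rewrite size_cat.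
split=> [|k k_ge2 k_le border]; first by lia.
have shift i : i < size s - k + 1 -> nth h s i = nth h s (k - 1 + i).
  by move=> lt_i; rewrite -(nth_take _ lt_i) border nth_drop.
(* A border starting at or before the marker z copies z into h :: P; one
   starting after z copies h into r. *)
have [k_le_z | k_gt_z] := leqP k (size P).+2.
- have := shift ((size P).+2 - k) ltac:(lia).
  have -> : k - 1 + ((size P).+2 - k) = (size P).+1 by lia.
  rewrite /s !nth_cat /= ltnn subnn.
  have -> : (size P).+2 - k < (size P).+1 by lia.
  move=> /= nth_z; apply: z_P; rewrite -nth_z.
  by apply: nth_In_seq => /=; lia.
- have := shift 0 ltac:(lia).
  have -> : k - 1 + 0 = (size P).+1 + (k - (size P).+3).+1 by lia.
  rewrite /s !nth_cat /= ltnNge leq_addr addKn /= => h_eq.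
  by apply: h_r; rewrite h_eq; apply: nth_In_seq; lia.
Qed.

Lemma simple_word_interleave_marker (T : Type) (h z : T) w0 m q r k :
  ~ In z (h :: w0 ++ m) -> ~ In z q -> ~ In h r ->
  simple_word (interleave (h :: w0) (rcons (nseq k m) (q ++ z :: r))).
Proof.
rewrite -cat_cons => z_wm z_q h_r.
have [z_w z_m] : ~ In z (h :: w0) /\ ~ In z m.
  by split=> z_in; apply/z_wm/In_cat; auto.
have -> : interleave (h :: w0) (rcons (nseq k m) (q ++ z :: r)) =
    h :: (w0 ++ flatten (nseq k (m ++ h :: w0)) ++ q) ++ z :: r.
  by rewrite interleave_rcons catA interleave_catw map_nseq /= -!catA.
apply: simple_word_marker => //.
rewrite -cat_cons => /In_cat [// | /In_cat [z_loops | //]].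
by case/In_cat: (In_flatten_nseq z_loops).
Qed.

Section Paths.
Variables (T : Type) (e : rel T).

Lemma path_first_visit u v p : path e u p -> last u p = v -> u <> v ->
  exists q, path e u (rcons q v) /\ ~ In v q.
Proof.
elim: p u => [|x p IHp] u /=; first by move=> _ -> [].
move=> /andP [e_ux x_p] last_v neq_uv.
have [<- | neq_xv] := classic (x = v); first by exists [::]; split => //=; rewrite e_ux.
have [q [q_path v_q]] := IHp x x_p last_v neq_xv.
exists (x :: q); split; first by rewrite /= e_ux.
by case.
Qed.

Lemma path_flatten_loops x s ws : path e x s ->
  (forall u, In u ws -> path e (last x s) (rcons u x)) ->
  path e (last x s) (flatten [seq u ++ x :: s | u <- ws]).
Proof.
move=> x_s; elim: ws => [|u ws IHws] //= loops.
rewrite cat_path -cat_rcons cat_path loops /=; last by left.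
rewrite !last_rcons x_s last_cat last_rcons /=.
by apply: IHws => v ws_v; apply: loops; right.
Qed.

End Paths.

Section Graph.
Variables (V : Type) (E : V -> V -> Prop).

Definition edgeb : rel V := fun x y => excluded_middle_informative (E x y).

Lemma edgebP x y : reflect (E x y) (edgeb x y).
Proof. by rewrite /edgeb; case: excluded_middle_informative => /= ?; constructor. Qed.

Lemma is_word_cons x s : is_word E (x :: s) <-> path edgeb x s.
Proof.
suff chain_path : edge_chain E (x :: s) <-> path edgeb x s
  by split=> [[_ /chain_path] | /chain_path].
elim: s x => [|y s IHs] x //.
change (E x y /\ edge_chain E (y :: s) <-> edgeb x y && path edgeb y s).
by rewrite IHs; split=> [[/edgebP -> ->] | /andP [/edgebP]].
Qed.

Lemma is_word_detour t h q x r :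
  path edgeb t (rcons (q ++ x :: r) h) -> is_word E (q ++ x :: r).
Proof.
have [y [s ->]] : exists y s, q ++ x :: r = y :: s by case: q; do 2 eexists.
by rewrite /= rcons_path => /andP [_ /andP [/is_word_cons]].
Qed.

Lemma is_word_interleave h w0 ws : path edgeb h w0 ->
  (forall u, In u ws -> path edgeb (last h w0) (rcons u h)) ->
  is_word E (interleave (h :: w0) ws ++ h :: w0).
Proof.
move=> w_path loops; rewrite interleave_catw; apply/is_word_cons.
by rewrite cat_path w_path path_flatten_loops.
Qed.

Lemma connected_path_via t h x : connected_graph E -> x <> t -> x <> h ->
  exists q r, path edgeb t (rcons (q ++ x :: r) h) /\ ~ In x q /\ ~ In h r.
Proof.
move=> E_conn neq_xt neq_xh.
have [p1 [/is_word_cons t_p1 last_p1]] := E_conn t x.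
have [p2 [/is_word_cons x_p2 last_p2]] := E_conn x h.
have [q [t_q x_q]] := path_first_visit t_p1 last_p1 (nesym neq_xt).
have [r [x_r h_r]] := path_first_visit x_p2 last_p2 neq_xh.
exists q, r; split=> //.
by rewrite rcons_cat rcons_cons -cat_rcons cat_path t_q last_rcons.
Qed.

Lemma connected_marked_detour t h s : infinite_type V -> connected_graph E ->
  exists q z r, path edgeb t (rcons (q ++ z :: r) h) /\
    ~ In z (t :: h :: s) /\ ~ In z q /\ ~ In h r.
Proof.
move=> V_inf E_conn; have [z z_fresh] := infinite_type_fresh V_inf (t :: h :: s).
have z_t : z <> t by move=> z_eq; apply: z_fresh; left.
have z_h : z <> h by move=> z_eq; apply: z_fresh; right; left.
have [q [r [c_path [z_q h_r]]]] := connected_path_via E_conn z_t z_h.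
by exists q, z, r.
Qed.

End Graph.

Theorem lemma5p2 (V : Type) (E : V -> V -> Prop) :
  infinite_type V -> connected_graph E ->
  forall (w : seq V) (n : nat), is_word E w -> 2 <= n ->
  exists ws : seq (seq V),
    size ws = n.-1 /\
    (forall u, List.In u ws -> is_word E u) /\
    (* w' = w w_1 w w_2 w ... w_{n-1} w is a word *)
    is_word E (interleave w ws ++ w) /\
    has_disjoint_occurrences n w (interleave w ws ++ w) /\
    (* w'' = w w_1 w w_2 w ... w_{n-1} is simple *)
    simple_word (interleave w ws).
Proof.
move=> V_inf E_conn [|h w0] n; first by case=> /(_ erefl).
move=> /is_word_cons w_path n_ge2; set t := last h w0.
have [q1 [x [r1 [m_path _]]]] := connected_marked_detour t h [::] V_inf E_conn.
have m_word := is_word_detour m_path; set m := q1 ++ x :: r1.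
have [q [z [r [c_path [z_fresh [z_q h_r]]]]]] :=
  connected_marked_detour t h (w0 ++ m) V_inf E_conn.
have c_word := is_word_detour c_path.
set ws := rcons (nseq (n - 2) m) (q ++ z :: r).
have ws_detours u : In u ws -> u = m \/ u = q ++ z :: r.
  rewrite /ws -cats1 => /In_cat [u_m | [<- | []]]; last by right.
  by left; exact: In_nseq u_m.
have size_ws : size ws = n.-1 by rewrite size_rcons size_nseq; lia.
exists ws; split=> //; split; first by move=> u /ws_detours [->|->].
split; first by apply: is_word_interleave => // u /ws_detours [->|->].
split.
  by rewrite -(ltn_predK n_ge2) -size_ws; apply: has_disjoint_occurrences_interleave.
by apply: simple_word_interleave_marker => // z_in; apply: z_fresh; right.
Qed.
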